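(* Let $G$ be a finite digraph such that $\mathrm{Pol}(G)\models\Sigma_M$ and $\mathrm{Pol}(G)\models\Sigma_p$ for every prime $p$. Then every minor condition satisfied by $\mathrm{Pol}(P_2)$ is also satisfied by $\mathrm{Pol}(G)$; i.e. $\Sigma(P_2)\subseteq\Sigma(G)$.
   Context: A digraph is $(V,E)$ with $E\subseteq V^2$. A polymorphism of arity $k$ of $H$ is a homomorphism $H^k\to H$ (where $H^k$ has vertices $V^k$ and edges $((u_i),(v_i))$ with $(u_i,v_i)\in E$ for all $i$); $\mathrm{Pol}(H)$ is the set of polymorphisms. For $f:V^k\to V$ and $\sigma:\{1,\dots,k\}\to\{1,\dots,n\}$, the minor $f_\sigma$ is $(x_1,\dots,x_n)\mapsto f(x_{\sigma(1)},\dots,x_{\sigma(k)})$. A minor condition is a set of formal equations $f_\sigma=g_\tau$ between function symbols (with arities) and maps $\sigma,\tau$; a set of operations $F$ satisfies it ($F\models\Sigma$) if the symbols can be interpreted by operations in $F$ of the right arities so that all equations hold identically. $\Sigma(H)$ is the class of minor conditions satisfied by $\mathrm{Pol}(H)$. $\Sigma_n$ is the condition $f(x_1,\dots,x_n)=f(x_2,\dots,x_n,x_1)$ for an $n$-ary $f$; $\Sigma_M$ is the condition $f(y,y,x)=f(x,x,x)=f(x,y,y)$ for a ternary $f$. $P_2$ has vertices $\{0,1\}$ and the single edge $(0,1)$. *)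

From mathcomp Require Import all_boot.
Set Implicit Arguments. Unset Strict Implicit. Unset Printing Implicit Defensive.

Definition op (V : Type) (k : nat) := {ffun 'I_k -> V} -> V.

Definition polymorphism (V : finType) (E : rel V) (k : nat) (f : op V k) : Prop :=
  forall u v : {ffun 'I_k -> V}, (forall i, E (u i) (v i)) -> E (f u) (f v).

Definition minor (V : Type) (k n : nat) (f : op V k) (sigma : 'I_k -> 'I_n) : op V n :=
  fun x => f [ffun i => x (sigma i)].

Record minor_eq (S : Type) (ar : S -> nat) := MinorEq {
  me_lhs : S;
  me_rhs : S;
  me_nvars : nat;
  me_sigma : 'I_(ar me_lhs) -> 'I_me_nvars;
  me_tau : 'I_(ar me_rhs) -> 'I_me_nvars }.

Record minor_condition := MinorCondition {
  mc_sym : Type;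
  mc_ar : mc_sym -> nat;
  mc_idx : Type;
  mc_eqs : mc_idx -> minor_eq mc_ar }.

Definition satisfies (V : Type) (F : forall k, op V k -> Prop) (C : minor_condition) : Prop :=
  exists interp : forall s : mc_sym C, op V (mc_ar s),
    (forall s, F (mc_ar s) (interp s)) /\
    (forall e : mc_idx C, let q := mc_eqs e in
       minor (interp (me_lhs q)) (@me_sigma _ _ q) =1 minor (interp (me_rhs q)) (@me_tau _ _ q)).

Definition Pol_models (V : finType) (E : rel V) (C : minor_condition) : Prop :=
  satisfies (fun k f => @polymorphism V E k f) C.

(* Sigma_n : f(x_1,...,x_n) = f(x_2,...,x_n,x_1). Position i of the right-hand side
   holds variable i+1 (mod n). *)
Definition Sigma_n (n : nat) : minor_condition :=
  @MinorCondition unit (fun _ => n) unit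
    (fun _ => @MinorEq unit (fun _ => n) tt tt n (fun i => i) (fun i => ordS i)).

(* Sigma_M : f(y,y,x) = f(x,x,x) = f(x,y,y), variables x = 0, y = 1. *)
Definition vx : 'I_2 := @Ordinal 2 0 isT.
Definition vy : 'I_2 := @Ordinal 2 1 isT.
Definition yyx (i : 'I_3) : 'I_2 := if val i == 2 then vx else vy.
Definition xxx (i : 'I_3) : 'I_2 := vx.
Definition xyy (i : 'I_3) : 'I_2 := if val i == 0 then vx else vy.

Definition Sigma_M : minor_condition :=
  @MinorCondition unit (fun _ => 3) bool
    (fun b => if b then @MinorEq unit (fun _ => 3) tt tt 2 yyx xxx
              else @MinorEq unit (fun _ => 3) tt tt 2 xxx xyy).

(* P_2: vertices {0,1} (false, true), single edge (0,1). *)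
Definition P2E : rel bool := fun a b => ~~ a && b.

From mathcomp Require Import all_boot zify boolp.
Set Implicit Arguments. Unset Strict Implicit. Unset Printing Implicit Defensive.

(* A loop yields constant polymorphisms, so assume G loopless.  A p-ary cyclic
   polymorphism applied to the p shifts c(t), c(t+q), ..., c(t+(p-1)q) of a
   closed walk of length qp is a closed walk of length q; hence cyclic terms of
   every prime arity forbid closed walks, and so walks of length >= |V|.
   With e x = m x x x for the Sigma_M term m, an oriented walk of net length N
   becomes, after enough iterations of e, a directed walk of length N.  So net
   lengths of oriented walks are bounded: G is balanced, with a level map lam
   increasing by one along edges, and G contains a directed path pi of length
   Lam = max lam.  A polymorphism f of P_2 then induces the polymorphism
   x |-> pi (max {t <= Lam | f (lam x_1 >= t, ..., lam x_k >= t)}) of G, and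
   this assignment commutes with taking minors. *)

Lemma ex_argmax (f : nat -> nat) a b : a <= b ->
  exists2 i, a <= i <= b & forall j, a <= j <= b -> f j <= f i.
Proof.
move=> ab; have a_ord : a <= @inord b a by rewrite inordK.
have [/= i ai imax] := @arg_maxnP _ _ (fun i : 'I_b.+1 => a <= i) (fun i => f i) a_ord.
exists i; first by rewrite ai -ltnS ltn_ord.
by move=> j /andP[aj jb]; have := imax (inord j); rewrite inordK //; apply.
Qed.

Lemma ex_argmin (f : nat -> nat) a b : a <= b ->
  exists2 i, a <= i <= b & forall j, a <= j <= b -> f i <= f j.
Proof.
move=> ab; have a_ord : a <= @inord b a by rewrite inordK.
have [/= i ai imin] := @arg_minnP _ _ (fun i : 'I_b.+1 => a <= i) (fun i => f i) a_ord.
exists i; first by rewrite ai -ltnS ltn_ord.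
by move=> j /andP[aj jb]; have := imin (inord j); rewrite inordK //; apply.
Qed.

Section Walks.
Variables (V : Type) (E : rel V).

Definition dwalk k x y :=
  exists z : nat -> V, [/\ z 0 = x, z k = y & forall i, i < k -> E (z i) (z i.+1)].

Lemma dwalk0 x : dwalk 0 x x.
Proof. by exists (fun=> x). Qed.

Lemma dwalk_cons k x y z : E x y -> dwalk k y z -> dwalk k.+1 x z.
Proof.
move=> Exy [w [w0 wk Ew]]; exists (fun i => if i is i'.+1 then w i' else x).
by split=> // -[|i] /= ltik; [rewrite w0 | apply: Ew].
Qed.

Lemma dwalk_cat a b x y z : dwalk a x y -> dwalk b y z -> dwalk (a + b) x z.
Proof.
move=> [w1 [w10 w1a E1]] [w2 [w20 w2b E2]].
exists (fun i => if i <= a then w1 i else w2 (i - a)); split=> //.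
  case: ifP => [leaba | _]; last by rewrite addKn.
  have b0 : b = 0 by lia.
  by rewrite b0 addn0 w1a -w20 -w2b b0.
move=> i ltiab; case: (ltngtP i a) => [ltia | ltai | eqia]; last subst i.
- exact: E1.
- by rewrite subSn 1?ltnW //; apply: E2; lia.
- by rewrite subSnn w1a -w20; apply: E2; lia.
Qed.

Lemma dwalk_split k d x y :
  dwalk k x y -> d <= k -> exists2 z, dwalk d x z & dwalk (k - d) z y.
Proof.
move=> [w [w0 wk Ew]] ledk; exists (w d).
  by exists w; split=> // i ltid; apply: Ew; lia.
exists (fun i => w (d + i)); split; rewrite ?addn0 ?subnKC //.
by move=> i ltikd; rewrite addnS; apply: Ew; lia.
Qed.

Lemma dwalk_homo (h : V -> V) k x y :
  {homo h : a b / E a b} -> dwalk k x y -> dwalk k (h x) (h y).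
Proof.
move=> hE [w [w0 wk Ew]]; exists (h \o w).
by split=> [|| i ltik]; rewrite /= ?w0 ?wk ?hE ?Ew.
Qed.

Definition owalk (w : nat -> V) (l : nat -> nat) L :=
  forall i, i < L -> (E (w i) (w i.+1) /\ l i.+1 = (l i).+1) \/
                     (E (w i.+1) (w i) /\ l i = (l i.+1).+1).

Lemma owalk_take w l L n : n <= L -> owalk w l L -> owalk w l n.
Proof. by move=> lenL Hw i ltin; apply: Hw; lia. Qed.

Lemma owalk_drop w l L s :
  owalk w l L -> owalk (fun i => w (s + i)) (fun i => l (s + i)) (L - s).
Proof. by move=> Hw i ltiLs; rewrite addnS; apply: Hw; lia. Qed.

Lemma owalk_rev w l L :
  owalk w l L -> owalk (fun i => w (L - i)) (fun i => l (L - i)) L.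
Proof.
move=> Hw i ltiL; have -> : L - i = (L - i.+1).+1 by lia.
by case: (Hw (L - i.+1)); [lia | right | left].
Qed.

Lemma owalk_snoc w l L v n :
  owalk w l L ->
  (E (w L) v /\ n = (l L).+1) \/ (E v (w L) /\ l L = n.+1) ->
  owalk (fun i => if i <= L then w i else v) (fun i => if i <= L then l i else n) L.+1.
Proof.
move=> Hw HL i ltiL1; case: (ltngtP i L) => [ltiL | ltLi | eqiL].
- exact: Hw.
- lia.
- by rewrite eqiL.
Qed.

End Walks.

Section CyclicPolymorphisms.
Variables (V : finType) (E : rel V).

Lemma cyclic_polymorphism p :
  Pol_models E (Sigma_n p) ->
  exists2 f : op V p, polymorphism E f & forall x : {ffun 'I_p -> V}, f [ffun i => x (ordS i)] = f x.
Proof.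
move=> [interp [interp_pol interp_eq]]; exists (interp tt) => [|x]; first exact: interp_pol.
symmetry; etransitivity; last exact: interp_eq tt x.
by rewrite /minor; congr (interp tt _); apply/ffunP => i; rewrite ffunE.
Qed.

Definition periodic_walk (c : nat -> V) d :=
  (forall i, E (c i) (c i.+1)) /\ (forall i, c (i + d) = c i).

Lemma periodic_walkM c d n i : periodic_walk c d -> c (i + n * d) = c i.
Proof.
case=> _ cper; elim: n => [|n IHn]; first by rewrite mul0n addn0.
by rewrite mulSnr addnA cper.
Qed.

Lemma cyclic_periodic_walk p q (f : op V p) c :
  polymorphism E f -> (forall x : {ffun 'I_p -> V}, f [ffun i => x (ordS i)] = f x) ->
  periodic_walk c (q * p) ->
  periodic_walk (fun t => f [ffun i : 'I_p => c (t + i * q)]) q.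
Proof.
move=> f_pol f_cyc cper; have [cE _] := cper; split=> [t | t].
  by apply: f_pol => i; rewrite !ffunE addSn; apply: cE.
rewrite -[RHS]f_cyc; congr f; apply/ffunP => i; rewrite !ffunE /=.
rewrite -addnA -mulSn {1}(divn_eq i.+1 p) mulnDl [X in _ + X]addnC addnA.
by rewrite -mulnA [p * q]mulnC (periodic_walkM _ _ cper).
Qed.

Lemma periodic_walk_loop :
  (forall p, prime p -> Pol_models E (Sigma_n p)) ->
  forall d c, 0 < d -> periodic_walk c d -> exists a, E a a.
Proof.
move=> cyclic; elim/ltn_ind => d IHd c d_gt0 cper; have [cE cP] := cper.
have [d1 | d_gt1] := leqP d 1.
  have d_eq1 : d = 1 by lia.
  by exists (c 0); rewrite -{2}(cP 0) d_eq1; apply: cE.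
have p_pr := pdiv_prime d_gt1; have p_gt0 := prime_gt0 p_pr.
have dE : d = d %/ pdiv d * pdiv d by rewrite divnK // pdiv_dvd.
have [f f_pol f_cyc] := cyclic_polymorphism (cyclic _ p_pr).
apply: (IHd (d %/ pdiv d)) (cyclic_periodic_walk f_pol f_cyc _); last by rewrite -dE.
  by rewrite ltn_Pdiv // prime_gt1.
by rewrite divn_gt0 // pdiv_leq //; lia.
Qed.

Lemma dwalk_long_loop n x y :
  (forall p, prime p -> Pol_models E (Sigma_n p)) ->
  #|V| <= n -> dwalk E n x y -> exists a, E a a.
Proof.
move=> cyclic len [z [_ _ Ez]].
have /injectivePn [i [j neqij zij]] : ~~ injectiveb (fun i : 'I_#|V|.+1 => z i).
  by apply/injectiveP => /leq_card; rewrite card_ord ltnn.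
wlog ltij : i j neqij zij / i < j.
  move=> W; case: (ltngtP i j) => [|ltji|/val_inj eqij]; first exact: W.
    by apply: (W j i); rewrite 1?eq_sym.
  by rewrite eqij eqxx in neqij.
set d := j - i; have d_gt0 : 0 < d by lia.
have jE : i + d = j by rewrite /d subnKC // ltnW.
apply: (periodic_walk_loop cyclic (d := d) (c := fun t => z (i + t %% d))) => //.
split=> t; last by rewrite modnDr.
have jn : j <= n by have := ltn_ord j; lia.
have ltrd : t %% d < d := ltn_pmod t d_gt0.
rewrite (_ : t.+1 %% d = (t %% d).+1 %% d); last first.
  by rewrite {1}(divn_eq t d) -addnS modnMDl.
have [ltr1d | ger1d] := ltnP (t %% d).+1 d.
  by rewrite (modn_small ltr1d) addnS; apply: Ez; lia.
have r1E : (t %% d).+1 = d by lia.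
rewrite r1E modnn addn0.
by rewrite zij (_ : nat_of_ord j = (i + t %% d).+1); [apply: Ez | ]; lia.
Qed.

End CyclicPolymorphisms.

Definition tuple3 (V : Type) (a b c : V) : {ffun 'I_3 -> V} :=
  [ffun i : 'I_3 => if val i == 0 then a else if val i == 1 then b else c].

Lemma Sigma_M_term (V : finType) (E : rel V) :
  Pol_models E Sigma_M ->
  exists m : V -> V -> V -> V,
    [/\ forall a b c a' b' c', E a a' -> E b b' -> E c c' -> E (m a b c) (m a' b' c'),
        forall x y, m x y y = m x x x
      & forall x y, m y y x = m x x x].
Proof.
move=> [interp [interp_pol interp_eq]].
exists (fun a b c => interp tt (tuple3 a b c)); split=> [a b c a' b' c' Ea Eb Ec | x y | x y].
- by apply: interp_pol => i; rewrite !ffunE; case: i => [[|[|[]]] ?].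
- pose xy := [ffun i : 'I_2 => if val i == 0 then x else y].
  have -> : tuple3 x y y = [ffun i => xy (xyy i)].
    by apply/ffunP => i; rewrite !ffunE; case: i => [[|[|[]]] ?].
  have -> : tuple3 x x x = [ffun i => xy (xxx i)].
    by apply/ffunP => i; rewrite !ffunE; case: i => [[|[|[]]] ?].
  exact: esym (interp_eq false xy).
- pose xy := [ffun i : 'I_2 => if val i == 0 then x else y].
  have -> : tuple3 y y x = [ffun i => xy (yyx i)].
    by apply/ffunP => i; rewrite !ffunE; case: i => [[|[|[]]] ?].
  have -> : tuple3 x x x = [ffun i => xy (xxx i)].
    by apply/ffunP => i; rewrite !ffunE; case: i => [[|[|[]]] ?].
  exact: interp_eq true xy.
Qed.

Section SigmaMTerm.
Variables (V : Type) (E : rel V) (m : V -> V -> V -> V).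
Hypothesis m_pol :
  forall a b c a' b' c', E a a' -> E b b' -> E c c' -> E (m a b c) (m a' b' c').
Hypothesis m_xyy : forall x y, m x y y = m x x x.
Hypothesis m_yyx : forall x y, m y y x = m x x x.

Let e x := m x x x.

Lemma homo_iter_diag c : {homo iter c e : a b / E a b}.
Proof. by elim: c => [|c IHc] a b Eab //=; apply: m_pol; apply: IHc. Qed.

Lemma dwalk_rectangle d k X Y Z W :
  dwalk E d X Y -> dwalk E d Z Y -> dwalk E k Z W -> d <= k -> dwalk E k (e X) (e W).
Proof.
(* Coordinatewise, m runs from m X Z Z = e X to m Y Y Z' = e Z'. *)
move=> [x [x0 xd Ex]] [z [z0 zd Ez]] ZW ledk.
have [Z' [u [u0 ud Eu]] Z'W] := dwalk_split ZW ledk.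
rewrite -(subnKC ledk); apply: dwalk_cat (dwalk_homo (homo_iter_diag 1) Z'W).
exists (fun i => m (x i) (z i) (u i)); split.
- by rewrite x0 z0 u0 m_xyy.
- by rewrite xd zd ud m_yyx.
- by move=> i ltid; apply: m_pol; [apply: Ex | apply: Ez | apply: Eu].
Qed.

Definition ewalk k x y := exists c, dwalk E k (iter c e x) (iter c e y).

Lemma dwalk_iter_mono k x y c c' :
  c <= c' -> dwalk E k (iter c e x) (iter c e y) -> dwalk E k (iter c' e x) (iter c' e y).
Proof.
by move=> lecc'; rewrite -(subnK lecc') !iterD; apply: dwalk_homo (homo_iter_diag _).
Qed.

Lemma ewalk0 x : ewalk 0 x x.
Proof. by exists 0; apply: dwalk0. Qed.

Lemma ewalk_cons k x y z : E x y -> ewalk k y z -> ewalk k.+1 x z.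
Proof. by move=> Exy [c yz]; exists c; apply: dwalk_cons yz; apply: homo_iter_diag. Qed.

Lemma ewalk_rectangle d k X Y Z W :
  ewalk d X Y -> ewalk d Z Y -> ewalk k Z W -> d <= k -> ewalk k X W.
Proof.
move=> [c1 XY] [c2 ZY] [c3 ZW] ledk; exists (c1 + c2 + c3).+1; rewrite !iterS.
by apply: (dwalk_rectangle _ _ _ ledk); apply: dwalk_iter_mono; try eassumption; lia.
Qed.

Lemma owalk_ewalk L k w l :
  owalk E w l L -> (forall i, i <= L -> l 0 <= l i <= l 0 + k) -> l L = l 0 + k ->
  ewalk k (w 0) (w L).
Proof.
elim/ltn_ind: L k w l => L IHL k w l Hw lb lL.
have [L0 | L_gt0] := posnP L.
  by move: lL; rewrite L0 -{1}[l 0]addn0 => /addnI <-; apply: ewalk0.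
(* Split at the last visit p to the bottom level.  From p the walk climbs to the
   top within [l 0 + 1, l 0 + k]; before p it is an excursion from the bottom back
   to it whose highest point r yields two bottom-to-top walks, w 0 -> w r and
   (reversed) w p -> w r, to which the rectangle lemma applies. *)
pose bottom i := (i <= L) && (l i == l 0).
have bottom0 : bottom 0 by rewrite /bottom leq0n eqxx.
have bottom_le i : bottom i -> i <= L by case/andP.
have [p /andP[lepL /eqP lp] p_max] := ex_maxnP (ex_intro _ 0 bottom0) bottom_le.
have ltpL : p < L.
  rewrite ltn_neqAle lepL andbT; apply/eqP => eqpL; subst p.
  by have := lb 1 L_gt0; case: (Hw 0 L_gt0) => -[_]; lia.
have [Ep lp1] : E (w p) (w p.+1) /\ l p.+1 = (l 0).+1.
  by have := lb p.+1 ltpL; case: (Hw p ltpL) => -[Ep]; lia.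
have [lt0k up_part] : 0 < k /\ ewalk k.-1 (w p.+1) (w L).
  split; first by have := lb p.+1 ltpL; lia.
  have /= := IHL (L - p.+1) ltac:(lia) k.-1 _ _ (owalk_drop (s := p.+1) Hw).
  rewrite addn0 subnKC //; apply; last by have := lb p.+1 ltpL; lia.
  move=> i lei; have := lb (p.+1 + i) ltac:(lia); have := p_max (p.+1 + i).
  by rewrite /bottom; lia.
have [r /andP[_ lerp] r_max] := ex_argmax l (leq0n p).
have ledk : l r - l 0 <= k by have := lb r ltac:(lia); lia.
have lr : l r = l 0 + (l r - l 0) by have := lb r ltac:(lia); lia.
apply: (ewalk_rectangle (Y := w r) (Z := w p) _ _ _ ledk).
- have := IHL r ltac:(lia) _ w l (owalk_take (ltnW (leq_ltn_trans lerp ltpL)) Hw).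
  apply=> // i lei; have := lb i ltac:(lia); have := r_max i ltac:(lia); lia.
- have /= := IHL (p - r) ltac:(lia) (l r - l 0) _ _
    (owalk_take (leq_subr r p) (owalk_rev (owalk_take (ltnW ltpL) Hw))).
  rewrite subn0 subKn // lp; apply=> // i lei.
  by have := lb (p - i) ltac:(lia); have := r_max (p - i) ltac:(lia); lia.
- by rewrite -(ltn_predK lt0k); apply: ewalk_cons up_part.
Qed.
Lemma owalk_net_dwalk L N w l :
  owalk E w l L -> l L = l 0 + N -> exists x y, dwalk E N x y.
Proof.
move=> Hw lL.
have [t /andP[_ letL] t_max] := ex_argmax l (leq0n L).
have [s /andP[_ lest] s_min] := ex_argmin l (leq0n t).
have lst : l s <= l t by apply: s_min; rewrite leq0n leqnn.
have leN : N <= l t - l s by have := t_max L; have := s_min 0; lia.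
have [c walk_st] : ewalk (l t - l s) (w s) (w t).
  have /= := owalk_ewalk (k := l t - l s) (owalk_drop (s := s) (owalk_take letL Hw)).
  rewrite addn0 (subnKC lest) (subnKC lst); apply=> // i lei.
  by have := t_max (s + i) ltac:(lia); have := s_min (s + i) ltac:(lia); lia.
have [z walk_N _] := dwalk_split walk_st leN.
by exists (iter c e (w s)), z.
Qed.

End SigmaMTerm.

Section Grading.
Variables (V : finType) (E : rel V).
Hypothesis net_dwalk :
  forall L N w l, owalk E w l L -> l L = l 0 + N -> exists x y, dwalk E N x y.
Hypothesis dwalk_short : forall n x y, dwalk E n x y -> n < #|V|.

Definition reaches v N :=
  `[< exists w l L, [/\ owalk E w l L, w L = v & l L = l 0 + N] >].

Lemma reaches0 v : reaches v 0.
Proof. by apply/asboolP; exists (fun=> v), (fun=> 0), 0; split=> // i; rewrite ltn0. Qed.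

Lemma reaches_le v N : reaches v N -> N <= #|V|.
Proof.
move=> /asboolP [w [l [L [Hw _ lL]]]].
by have [x [y /dwalk_short/ltnW]] := net_dwalk Hw lL.
Qed.

Lemma reaches_succ u v N : E u v -> reaches u N -> reaches v N.+1.
Proof.
move=> Euv /asboolP [w [l [L [Hw wL lL]]]]; apply/asboolP.
exists (fun i => if i <= L then w i else v), (fun i => if i <= L then l i else (l L).+1), L.+1.
split; rewrite /= ?ltnn ?addnS ?lL //.
by apply: owalk_snoc => //; left; rewrite wL lL.
Qed.

Lemma reaches_pred u v N : E u v -> reaches v N.+1 -> reaches u N.
Proof.
move=> Euv /asboolP [w [l [L [Hw wL lL]]]]; apply/asboolP.
exists (fun i => if i <= L then w i else u), (fun i => if i <= L then l i else (l L).-1), L.+1.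
split; rewrite /= ?ltnn; [|by []|lia].
by apply: owalk_snoc => //; right; rewrite wL lL addnS.
Qed.

Definition level v := ex_maxn (ex_intro _ 0 (reaches0 v)) (@reaches_le v).

Lemma level_edge u v : E u v -> level v = (level u).+1.
Proof.
move=> Euv; rewrite /level; case: ex_maxnP => j reach_j max_j.
case: ex_maxnP => i reach_i max_i.
have lt_ij : i < j by apply: max_j; apply: reaches_succ reach_i.
apply/eqP; rewrite eqn_leq lt_ij andbT -(ltn_predK lt_ij) ltnS.
by apply: max_i; apply: reaches_pred Euv _; rewrite (ltn_predK lt_ij).
Qed.

Lemma graded_path (v0 : V) :
  exists (lam : V -> nat) (Lam : nat) (pi : nat -> V),
    [/\ forall u v, E u v -> lam v = (lam u).+1,
        forall v, lam v <= Lam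
      & forall t, t < Lam -> E (pi t) (pi t.+1)].
Proof.
have V_gt0 : 0 < #|V| by apply/card_gt0P; exists v0.
have [v_top top_max] := eq_bigmax level V_gt0.
have /asboolP [w [l [L [Hw _ lL]]]] : reaches v_top (level v_top).
  by rewrite /level; case: ex_maxnP.
have [_ [_ [pi [_ _ pi_walk]]]] := net_dwalk Hw lL.
exists level, (level v_top), pi; split=> // [u v | v]; first exact: level_edge.
by rewrite -top_max; apply: leq_bigmax.
Qed.

End Grading.

Section BigmaxOrd.
Variables (P : pred nat) (n : nat).
Local Notation top := (\max_(t < n.+1 | P t) t).

Lemma bigmax_ord_le : top <= n.
Proof. by apply/bigmax_leqP => t _; rewrite -ltnS. Qed.

Lemma bigmax_ord_sup t : t <= n -> P t -> t <= top.
Proof. by rewrite -ltnS => ltn Pt; apply: (leq_bigmax_cond (Ordinal ltn)). Qed.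

Lemma bigmax_ord_cond : P 0 -> P top.
Proof.
move=> P0; have [|t Pt ->] := @eq_bigmax_cond _ (fun t : 'I_n.+1 => P t) val.
  by apply/card_gt0P; exists ord0.
exact: Pt.
Qed.

Lemma bigmax_ordE m : m <= n -> P m -> (forall t, t <= n -> P t -> t <= m) -> top = m.
Proof.
move=> lemn Pm m_max; apply/eqP; rewrite eqn_leq bigmax_ord_sup // andbT.
by apply/bigmax_leqP => t Pt; apply: m_max; rewrite // -ltnS.
Qed.

End BigmaxOrd.

Lemma P2_polymorphism_const k (f : op bool k) :
  polymorphism P2E f -> f [ffun=> false] = false /\ f [ffun=> true] = true.
Proof.
move=> /(_ [ffun=> false] [ffun=> true]) f_edge.
by have /andP[/negbTE -> ->] := f_edge (fun i => ltac:(by rewrite !ffunE)).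
Qed.

Lemma P2_polymorphism_arity_gt0 k (f : op bool k) : polymorphism P2E f -> 0 < k.
Proof.
move=> /P2_polymorphism_const[]; case: k f => // f.
suff -> : [ffun=> true] = [ffun=> false] :> {ffun 'I_0 -> bool} by move=> ->.
by apply/ffunP => -[].
Qed.

Section ThresholdPolymorphisms.
Variables (V : finType) (E : rel V) (lam : V -> nat) (Lam : nat) (pi : nat -> V).

Definition threshold_op k (f : op bool k) : op V k :=
  fun x => pi (\max_(t < Lam.+1 | f [ffun i => t <= lam (x i)]) t).

Lemma threshold_op_minor k n (f : op bool k) (s : 'I_k -> 'I_n) :
  minor (threshold_op f) s =1 threshold_op (minor f s).
Proof.
by move=> x; congr pi; apply: eq_bigl => t; congr f; apply/ffunP => i; rewrite !ffunE.
Qed.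

Hypothesis lam_edge : forall u v, E u v -> lam v = (lam u).+1.
Hypothesis lam_le : forall v, lam v <= Lam.
Hypothesis pi_walk : forall t, t < Lam -> E (pi t) (pi t.+1).

Lemma threshold_op_polymorphism k (f : op bool k) :
  polymorphism P2E f -> polymorphism E (threshold_op f).
Proof.
move=> f_pol x y Exy; have [f0 f1] := P2_polymorphism_const f_pol.
pose P (z : {ffun 'I_k -> V}) t := f [ffun i => t <= lam (z i)].
have P0 z : P z 0.
  by rewrite /P (_ : [ffun i => _] = [ffun=> true]) //; apply/ffunP => i; rewrite !ffunE.
have Py_succ t : P y t.+1 = P x t.
  by rewrite /P; congr f; apply/ffunP => i; rewrite !ffunE (lam_edge (Exy i)).
have notPx : ~~ P x Lam.
  rewrite /P (_ : [ffun i => _] = [ffun=> false]) ?f0 //; apply/ffunP => i.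
  by rewrite !ffunE; apply: negbTE; rewrite -ltnNge -(lam_edge (Exy i)).
have ltTLam : \max_(t < Lam.+1 | P x t) t < Lam.
  rewrite ltn_neqAle bigmax_ord_le andbT; apply: contraNneq notPx => <-.
  exact: bigmax_ord_cond.
rewrite /threshold_op (_ : \max_(t < Lam.+1 | P y t) t = (\max_(t < Lam.+1 | P x t) t).+1).
  exact: pi_walk.
apply: bigmax_ordE => //; first by rewrite Py_succ bigmax_ord_cond.
by move=> [//|t] leLam; rewrite Py_succ; apply: bigmax_ord_sup; apply: ltnW.
Qed.

Lemma Pol_models_P2_graded (C : minor_condition) : Pol_models P2E C -> Pol_models E C.
Proof.
move=> [interp [interp_pol interp_eq]].
exists (fun s => threshold_op (interp s)); split=> [s | e /= x].
  exact: threshold_op_polymorphism.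
by rewrite !threshold_op_minor; congr pi; apply: eq_bigl => t; apply: interp_eq.
Qed.

End ThresholdPolymorphisms.

Lemma Pol_models_loop (V : finType) (E : rel V) a C : E a a -> Pol_models E C.
Proof. by move=> Eaa; exists (fun _ _ => a); split=> // s u v _. Qed.

Lemma Pol_models_void (V : finType) (E : rel V) C :
  #|V| = 0 -> (forall s : mc_sym C, 0 < mc_ar s) -> Pol_models E C.
Proof.
move=> V0 ar_gt0; have noV (v : V) : False by move: (card0_eq V0 v); rewrite !inE.
exists (fun s x => x (Ordinal (ar_gt0 s))); split=> [s u | e /= x].
  by case: (noV (u (Ordinal (ar_gt0 s)))).
by case: (noV (x (me_sigma (Ordinal (ar_gt0 _))))).
Qed.

Theorem mainTheorem8 (V : finType) (E : rel V) :
  Pol_models E Sigma_M ->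
  (forall p : nat, prime p -> Pol_models E (Sigma_n p)) ->
  forall C : minor_condition, Pol_models P2E C -> Pol_models E C.
Proof.
move=> HM cyclic C HC.
case: (pickP (fun a => E a a)) => [a Eaa | noloop]; first exact: Pol_models_loop Eaa.
have [V0 | /card_gt0P [v0 _]] := posnP #|V|.
  apply: Pol_models_void V0 _ => s; have [interp [interp_pol _]] := HC.
  exact: P2_polymorphism_arity_gt0 (interp_pol s).
have [m [m_pol m_xyy m_yyx]] := Sigma_M_term HM.
have short n x y : dwalk E n x y -> n < #|V|.
  rewrite ltnNge => walk; apply/negP => long.
  by have [a] := dwalk_long_loop cyclic long walk; rewrite noloop.
have [lam [Lam [pi [lam_edge lam_le pi_walk]]]] :=
  graded_path (owalk_net_dwalk m_pol m_xyy m_yyx) short v0.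
exact: (Pol_models_P2_graded lam_edge lam_le pi_walk HC).
Qed.
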